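(* Let $\{P_n\}$, $\{R_n\}$, $\{S_n\}$ be Brenke polynomial sets with exponential generating functions $A_1(t)B_1(xt)$, $A_2(t)B_2(xt)$, $A_3(t)B_3(xt)$, where $A_i(t)=\sum_ka^{(i)}_kt^k$, $B_i(t)=\sum_kb^{(i)}_kt^k$, $a^{(i)}_0b^{(i)}_k\neq0$. Write $1/A_1(t)=\sum_{n\ge0}\widehat a^{(1)}_nt^n$ and set $\widehat a^{(1)}_{-n}=0$ for $n\ge1$. Then the coefficients in $R_i(x)S_j(x)=\sum_{k=0}^{i+j}L_{ij}(k)P_k(x)$ are $$L_{ij}(k)=\frac{i!\,j!}{k!}\sum_{n=0}^i\sum_{m=0}^j\frac{b^{(2)}_nb^{(3)}_m}{b^{(1)}_{n+m}}\,a^{(2)}_{i-n}a^{(3)}_{j-m}\,\widehat a^{(1)}_{n+m-k},\qquad k=0,1,\dots,i+j.$$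
   Context: A Brenke polynomial set is a sequence of polynomials $P_n$ with $\deg P_n=n$ generated as formal power series in $t$ by $A(t)B(xt)=\sum_{n\ge0}P_n(x)t^n/n!$, where $A(0)\ne0$ and all Taylor coefficients of $B$ are nonzero. *)

From mathcomp Require Import all_boot all_order all_algebra.
Set Implicit Arguments. Unset Strict Implicit. Unset Printing Implicit Defensive.
Import GRing.Theory.
Local Open Scope ring_scope.

(* Brenke polynomial with generating function A(t)B(xt), where
   A(t) = \sum_k a k t^k and B(t) = \sum_k b k t^k.  Extracting the
   coefficient of t^n/n! in A(t)B(xt) gives
   P_n(x) = n! \sum_{k=0}^n a_{n-k} b_k x^k. *)
Definition brenke (F : fieldType) (a b : nat -> F) (n : nat) : {poly F} :=
  \poly_(k < n.+1) ((n`!)%:R * a (n - k)%N * b k).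

(* ahat is the coefficient sequence of the formal power series 1/A(t):
   (\sum_k a_k t^k)(\sum_k ahat_k t^k) = 1. *)
Definition is_recip_series (F : fieldType) (a ahat : nat -> F) : Prop :=
  forall n : nat, \sum_(k < n.+1) a k * ahat (n - k)%N = (n == 0%N)%:R.

Definition ahat_at (F : fieldType) (ahat : nat -> F) (p k : nat) : F :=
  if (k <= p)%N then ahat (p - k)%N else 0.

Definition Lcoef (F : fieldType) (a1hat a2 a3 b1 b2 b3 : nat -> F)
    (i j k : nat) : F :=
  ((i`!)%:R * (j`!)%:R / (k`!)%:R) *
  \sum_(n < i.+1) \sum_(m < j.+1)
     (b2 n * b3 m / b1 (n + m)%N * a2 (i - n)%N * a3 (j - m)%N
       * ahat_at a1hat (n + m)%N k).

From mathcomp Require Import all_boot all_order all_algebra.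
From mathcomp Require Import ring.
Set Implicit Arguments. Unset Strict Implicit. Unset Printing Implicit Defensive.
Import GRing.Theory.
Local Open Scope ring_scope.

(* 1. Inversion of the Brenke basis.  Since 1/A_1 = \sum_k ahat_k t^k, every
      monomial expands in the basis (P_k):
        x^p = \sum_{k <= p} ahat_{p-k} / (k! b1_p) P_k.
      Comparing coefficients of x^l, this is exactly the convolution identity
      \sum_{l <= k <= p} ahat_{p-k} a1_{k-l} = [p = l] defining ahat.
   2. Expand R_i S_j as a double sum over monomials x^(n+m), replace each
      monomial by its expansion from step 1 (padded with zero terms up to
      k = i + j), and exchange the order of summation; the coefficient of P_k
      collected this way is L_{ij}(k). *)

Lemma coef_brenke (F : fieldType) (a b : nat -> F) (n l : nat) :
  (brenke a b n)`_l = if (l <= n)%N then (n`!)%:R * a (n - l)%N * b l else 0.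
Proof. by rewrite coef_poly ltnS. Qed.

Lemma brenkeE (F : fieldType) (a b : nat -> F) (n : nat) :
  brenke a b n = \sum_(l < n.+1) ((n`!)%:R * a (n - l)%N * b l) *: 'X^l.
Proof. by rewrite /brenke poly_def. Qed.

Lemma natr_fact_neq0 (F : fieldType) (charF0 : [pchar F] =i pred0) (k : nat) :
  (k`!)%:R != 0 :> F.
Proof. by rewrite (pcharf0P F).1 // -lt0n fact_gt0. Qed.

Lemma recip_series_shift (F : fieldType) (a ahat : nat -> F) (l p : nat) :
  is_recip_series a ahat -> (l <= p)%N ->
  \sum_(l <= k < p.+1) ahat (p - k)%N * a (k - l)%N = (p == l)%:R.
Proof.
move=> hrecip hlp.
rewrite -{1}[l]add0n big_addn subSn // big_mkord.
have -> : (p == l) = (p - l == 0)%N by rewrite subn_eq0 eqn_leq hlp andbT.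
rewrite -hrecip; apply: eq_bigr => k _.
by rewrite addnK addnC subnDA mulrC.
Qed.

Lemma monomial_in_brenke_basis (F : fieldType) (charF0 : [pchar F] =i pred0)
    (a b ahat : nat -> F) (hb : forall k, b k != 0)
    (hrecip : is_recip_series a ahat) (N p : nat) :
  (p <= N)%N ->
  'X^p = \sum_(k < N.+1) (ahat_at ahat p k / (k`!)%:R / b p) *: brenke a b k.
Proof.
move=> hpN; apply/polyP => l.
rewrite coefXn coef_sum.
transitivity (b l / b p * \sum_(l <= k < p.+1) ahat (p - k)%N * a (k - l)%N);
  last first.
  rewrite mulr_sumr (big_nat_widenl _ 0) // (big_nat_widen _ _ N.+1) ?ltnS //.
  rewrite big_mkcond big_mkord; apply: eq_bigr => k _.
  rewrite coefZ coef_brenke /ahat_at ltnS.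
  case: (leqP l k) => hlk; case: (leqP k p) => hkp /=; rewrite ?mulr0 ?mul0r //.
  by field; rewrite hb natr_fact_neq0.
case: (leqP l p) => [hlp | hpl].
  rewrite recip_series_shift // eq_sym.
  by case: eqP => [->|_]; rewrite ?mulr0 // mulr1 divff.
by rewrite big_geq // mulr0 gtn_eqF.
Qed.

Theorem mainTheorem9 (F : fieldType) (charF0 : [pchar F] =i pred0)
    (a1 a2 a3 b1 b2 b3 a1hat : nat -> F)
    (ha1 : a1 0%N != 0) (ha2 : a2 0%N != 0) (ha3 : a3 0%N != 0)
    (hb1 : forall k, b1 k != 0) (hb2 : forall k, b2 k != 0)
    (hb3 : forall k, b3 k != 0)
    (hrecip : is_recip_series a1 a1hat) :
  forall i j : nat,
    brenke a2 b2 i * brenke a3 b3 j =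
    \sum_(k < (i + j).+1)
       Lcoef a1hat a2 a3 b1 b2 b3 i j k *: brenke a1 b1 k.
Proof.
move=> i j.
(* weight of P_k in the expansion of the monomial term x^(n+m) of R_i S_j *)
pose weight n m k := ((i`!)%:R * a2 (i - n)%N * b2 n) * ((j`!)%:R * a3 (j - m)%N * b3 m)
  * (ahat_at a1hat (n + m) k / (k`!)%:R / b1 (n + m)%N).
have expand_product : brenke a2 b2 i * brenke a3 b3 j =
    \sum_(n < i.+1) \sum_(m < j.+1) \sum_(k < (i + j).+1) weight n m k *: brenke a1 b1 k.
  rewrite !brenkeE mulr_suml; apply: eq_bigr => n _.
  rewrite mulr_sumr; apply: eq_bigr => m _.
  have hnm : (n + m <= i + j)%N by apply: leq_add; rewrite -ltnS.
  rewrite -scalerAl -scalerAr -exprD.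
  rewrite (monomial_in_brenke_basis charF0 hb1 hrecip hnm) !scaler_sumr.
  by apply: eq_bigr => k _; rewrite /weight !scalerA mulrA.
rewrite expand_product.
under eq_bigr => n _ do rewrite exchange_big.
rewrite exchange_big; apply: eq_bigr => k _.
under eq_bigr => n _ do rewrite -scaler_suml.
rewrite -scaler_suml; congr (_ *: _).
rewrite /Lcoef mulr_sumr; apply: eq_bigr => n _.
by rewrite mulr_sumr; apply: eq_bigr => m _; rewrite /weight; ring.
Qed.
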